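(* Let $G$ be a finite connected graph and let $e_1,\dots,e_c$ be its loop-edges. For $\underline n=(n_1,\dots,n_c)$ with each $n_i$ a positive integer, let $G^{(\underline n)}$ be the refinement of $G$ obtained by inserting $n_i$ new vertices in the interior of $e_i$ for each $i$, and let $\sigma^*:\operatorname{Div}(G)\to\operatorname{Div}(G^{(\underline n)})$ be the map extending divisors by $0$ on the new vertices. Then for every $D\in\operatorname{Div}(G)$, $$r^{\#}_G(D)=r_{G^{(\underline n)}}(\sigma^*D).$$
   Context: Graphs are finite and connected, loops and multiple edges allowed. $\operatorname{Div}(G)$ is the free abelian group on $V(G)$. Define $(v\cdot w)$ as the number of edges joining $v,w$ if $v\ne w$, and $(v\cdot v)=-\operatorname{val}(v)+2\operatorname{loop}(v)$ (valency with loops counted twice). $T_v=\sum_w(v\cdot w)w$, $\operatorname{Prin}(G)$ is the subgroup generated by the $T_v$, $D\sim D'$ iff $D-D'\in\operatorname{Prin}(G)$. The rank $r_G(D)$ is $-1$ if no effective divisor is equivalent to $D$, and otherwise the maximum $k\ge0$ such that for every effective $E$ of degree $k$ some effective divisor is equivalent to $D-E$. Let $\widehat G$ be the graph obtained from $G$ by inserting exactly one new vertex in the interior of every loop-edge, and $\sigma^*:\operatorname{Div}(G)\to\operatorname{Div}(\widehat G)$ extension by zero; define $r^{\#}_G(D):=r_{\widehat G}(\sigma^*D)$. *)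

From mathcomp Require Import all_boot all_order all_algebra.
From Stdlib Require Import ClassicalEpsilon.
Set Implicit Arguments. Unset Strict Implicit. Unset Printing Implicit Defensive.
Import Order.TTheory GRing.Theory Num.Theory.

(* A finite multigraph (loops and multiple edges allowed): vertices are the
   natural numbers 0 .. nV-1; edges is the list of edges, each given by its
   two endpoints (a loop is an edge (v,v); repeated entries = multiple edges). *)
Record graph := Graph { nV : nat; edges : seq (nat * nat) }.

Definition wf_graph (G : graph) : Prop :=
  all (fun e => (e.1 < nV G) && (e.2 < nV G)) (edges G).

Definition is_loop (e : nat * nat) : bool := e.1 == e.2.

Definition adj (G : graph) (x y : nat) : bool :=
  has (fun e => ((e.1 == x) && (e.2 == y)) || ((e.1 == y) && (e.2 == x))) (edges G).

Definition connected (G : graph) : Prop :=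
  0 < nV G /\
  forall v w, v < nV G -> w < nV G ->
    exists p : seq nat, path (adj G) v p /\ last v p = w.

(* Divisors: functions nat -> int, only the values on vertices (< nV) matter. *)
Definition divisor := nat -> int.

Local Open Scope ring_scope.

Definition nedges (G : graph) (v w : nat) : nat :=
  count (fun e => ((e.1 == v) && (e.2 == w)) || ((e.1 == w) && (e.2 == v))) (edges G).
Definition valency (G : graph) (v : nat) : nat :=
  \sum_(e <- edges G) ((e.1 == v) + (e.2 == v))%N.
Definition nloops (G : graph) (v : nat) : nat :=
  count (fun e => (e.1 == v) && (e.2 == v)) (edges G).

Definition dot (G : graph) (v w : nat) : int :=
  if v == w then - (valency G v)%:Z + 2 * (nloops G v)%:Z
  else (nedges G v w)%:Z.

Definition T (G : graph) (v : nat) : divisor := fun w => dot G v w.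

Definition lin_equiv (G : graph) (D D' : divisor) : Prop :=
  exists c : nat -> int, forall w, (w < nV G)%N ->
    D w - D' w = \sum_(v < nV G) c v * T G v w.

Definition effective (G : graph) (E : divisor) : Prop :=
  forall w, (w < nV G)%N -> 0 <= E w.

Definition deg (G : graph) (E : divisor) : int := \sum_(w < nV G) E w.

Definition rank_ge (G : graph) (D : divisor) (k : nat) : Prop :=
  forall E : divisor, effective G E -> deg G E = k%:Z ->
    exists F : divisor, effective G F /\ lin_equiv G (fun w => D w - E w) F.

Definition is_rank (G : graph) (D : divisor) (r : int) : Prop :=
  (~ (exists F : divisor, effective G F /\ lin_equiv G D F) /\ r = -1)
  \/ ((exists F : divisor, effective G F /\ lin_equiv G D F) /\
      exists k : nat, r = k%:Z /\ rank_ge G D k /\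
        forall k' : nat, rank_ge G D k' -> (k' <= k)%N).

Definition rank (G : graph) (D : divisor) : int :=
  epsilon (inhabits 0) (fun r => is_rank G D r).

(* Subdivision: insert m j new vertices in the interior of the j-th edge.
   New vertices get the indices nV G, nV G + 1, ...; old vertices keep theirs. *)
Definition sub_offset (G : graph) (m : nat -> nat) (j : nat) : nat :=
  (nV G + \sum_(0 <= i < j) m i)%N.

Definition sub_edges (G : graph) (m : nat -> nat) (j : nat) (e : nat * nat)
  : seq (nat * nat) :=
  let k := m j in let o := sub_offset G m j in
  if k == 0%N then [:: e]
  else (e.1, o) :: [seq ((o + i)%N, (o + i).+1) | i <- iota 0 k.-1]
         ++ [:: ((o + k.-1)%N, e.2)].

Definition subdivide (G : graph) (m : nat -> nat) : graph :=
  Graph (nV G + \sum_(0 <= j < size (edges G)) m j)%N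
        (flatten [seq sub_edges G m j (nth (0%N, 0%N) (edges G) j)
                 | j <- iota 0 (size (edges G))]).

Definition loop_counts (G : graph) (n : nat -> nat) : nat -> nat :=
  fun j => if is_loop (nth (0%N, 0%N) (edges G) j) then n j else 0%N.

Definition refine_loops (G : graph) (n : nat -> nat) : graph :=
  subdivide G (loop_counts G n).

Definition hat (G : graph) : graph := refine_loops G (fun _ => 1%N).

Definition sigma (G : graph) (D : divisor) : divisor :=
  fun x => if (x < nV G)%N then D x else 0.

Definition rank_sharp (G : graph) (D : divisor) : int := rank (hat G) (sigma G D).

(* For every [k], [rank_ge] of [sigma D] on [refine_loops G n] is equivalent to a
   condition on [G] alone in which a chip lying on the cycle that replaces a loop
   counts as two chips at the base of the loop; so the rank does not depend on [n].
   A principal divisor on a cycle has degree 0 and a first moment divisible by the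
   length; this forces two chips to the base when a potential on the refinement is
   restricted to [G], and conversely any divisor of degree 0 on a cycle becomes
   principal after moving one chip to a suitable vertex, which lets potentials on
   [G] be extended along the cycles. *)

From mathcomp Require Import all_boot all_order all_algebra.
From mathcomp Require Import zify ring lra.
From Stdlib Require Import FunctionalExtensionality PropExtensionality.
Set Implicit Arguments. Unset Strict Implicit. Unset Printing Implicit Defensive.
Import Order.TTheory GRing.Theory Num.Theory.
Local Open Scope ring_scope.

Definition b2z (b : bool) : int := if b then 1 else 0.

Lemma sum_ord_pick N (c : nat -> int) x : (x < N)%N ->
  \sum_(v < N) c v * b2z ((v : nat) == x) = c x.
Proof.
move=> hx; rewrite (bigD1 (Ordinal hx)) //= /b2z eqxx mulr1 big1 ?addr0 // => i hi.
case: eqP => [e|]; last by rewrite mulr0.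
by move/eqP: hi; case; apply: val_inj.
Qed.

Lemma sum_nat_pick N (g : nat -> int) q : (q < N)%N ->
  \sum_(0 <= p < N) b2z (p == q) * g p = g q.
Proof.
move=> hq; rewrite big_mkord -(sum_ord_pick g hq); apply: eq_bigr => i _; exact: mulrC.
Qed.

Lemma sum_nat_only (m : nat) (P : pred nat) (h : nat -> int) j : (j < m)%N ->
  (forall j', (j' < m)%N -> j' != j -> P j' -> h j' = 0) ->
  \sum_(0 <= j' < m | P j') h j' = if P j then h j else 0.
Proof.
move=> hj hu.
have hjr : j \in index_iota 0 m by rewrite mem_index_iota; lia.
rewrite big_mkcond (bigD1_seq j) ?iota_uniq //= [X in _ + X]big1_seq ?addr0 //.
move=> j' /andP [hjj']; rewrite mem_index_iota => hj'.
by case: ifP => // hP; apply: hu => //; lia.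
Qed.

Definition edge_flow (c : nat -> int) (e : nat * nat) (w : nat) : int :=
  if e.1 == e.2 then 0 else
  (if e.1 == w then c e.2 - c e.1 else 0) + (if e.2 == w then c e.1 - c e.2 else 0).

Definition laplacian (Y : graph) (c : nat -> int) (w : nat) : int :=
  \sum_(e <- edges Y) edge_flow c e w.

Definition edge_dot (e : nat * nat) (v w : nat) : int :=
  if e.1 == e.2 then 0 else
  b2z (v == e.1) * b2z (e.2 == w) + b2z (v == e.2) * b2z (e.1 == w)
  - b2z (v == w) * (b2z (e.1 == w) + b2z (e.2 == w)).

Lemma dot_edge_sum Y v w : dot Y v w = \sum_(e <- edges Y) edge_dot e v w.
Proof.
rewrite /dot /valency /nloops /nedges.
case: (v =P w) => [<-|hvw]; elim: (edges Y) => [|[a b] s IH]; rewrite ?big_nil //.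
  rewrite !big_cons /= -IH /edge_dot /= eqxx.
  move: (\sum_(j <- s) _)%N (count _ s) => x y.
  by rewrite /b2z; repeat (case: eqP => /= ?); lia.
rewrite !big_cons /= -IH /edge_dot /=.
have -> : (v == w) = false by apply/eqP.
move: (count _ s) => x.
by rewrite /b2z; repeat (case: eqP => /= ?); lia.
Qed.

Lemma sum_edge_dot N (c : nat -> int) e w : (e.1 < N)%N -> (e.2 < N)%N ->
  \sum_(v < N) c v * edge_dot e v w = edge_flow c e w.
Proof.
case: e => a b /= ha hb; rewrite /edge_dot /edge_flow /=.
case: eqP => [_|hab]; first by rewrite big1 // => i _; rewrite mulr0.
under eq_bigr => v _ do rewrite mulrBr mulrDr !mulrA.
rewrite sumrB big_split /= -!big_distrl /= (sum_ord_pick c ha) (sum_ord_pick c hb).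
have -> : (\sum_(i < N) c i * b2z ((i : nat) == w)) * (b2z (a == w) + b2z (b == w)) =
    c a * b2z (a == w) + c b * b2z (b == w).
  case: (a =P w) => [<-|haw]; first by rewrite sum_ord_pick // /b2z; case: eqP => //; lia.
  case: (b =P w) => [<-|hbw]; first by rewrite sum_ord_pick // /b2z; lia.
  by rewrite /b2z /= mulr0 !mulr0 addr0.
by rewrite /b2z; repeat (case: eqP => /= ?); lia.
Qed.

Lemma sum_T_laplacian Y (c : nat -> int) w : wf_graph Y ->
  \sum_(v < nV Y) c v * T Y v w = laplacian Y c w.
Proof.
move=> /allP wf; rewrite /T /laplacian.
under eq_bigr do rewrite dot_edge_sum big_distrr.
rewrite exchange_big /= big_seq [RHS]big_seq; apply: eq_bigr => e he.
by have /andP [h1 h2] := wf e he; apply: sum_edge_dot.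
Qed.

Lemma lin_equiv_laplacian Y D F : wf_graph Y ->
  lin_equiv Y D F <-> exists c, forall w, (w < nV Y)%N -> D w - F w = laplacian Y c w.
Proof.
move=> wf; split=> [] [c hc]; exists c => w hw; rewrite hc //.
  exact: sum_T_laplacian.
by rewrite sum_T_laplacian.
Qed.

Lemma laplacian_out Y c w : wf_graph Y -> (nV Y <= w)%N -> laplacian Y c w = 0.
Proof.
move=> /allP wf hw; rewrite /laplacian big1_seq // => -[a b] /andP [_ he].
have /andP [/= h1 h2] := wf _ he.
rewrite /edge_flow /=; case: eqP => // _.
by rewrite !ifF //; apply/eqP; lia.
Qed.

Lemma eq_laplacian Y c c' w : wf_graph Y -> (forall v, (v < nV Y)%N -> c v = c' v) ->
  laplacian Y c w = laplacian Y c' w.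
Proof.
move=> /allP wf hc; rewrite /laplacian big_seq [RHS]big_seq; apply: eq_bigr => e he.
by have /andP [h1 h2] := wf e he; rewrite /edge_flow !hc.
Qed.

Definition cyc_lap (L : nat) (f : nat -> int) (p : nat) : int :=
  f (if p == 0%N then L.-1 else p.-1) + f (if p == L.-1 then 0%N else p.+1) - 2 * f p.

Lemma eq_cyc_lap L f f' p : (forall i, (i < L)%N -> f i = f' i) -> (p < L)%N ->
  cyc_lap L f p = cyc_lap L f' p.
Proof.
move=> h hp; rewrite /cyc_lap !h //; case: eqP => ?; lia.
Qed.

Lemma cyc_lap_shift L (a : int) f p : cyc_lap L (fun i => a + f i) p = cyc_lap L f p.
Proof. rewrite /cyc_lap; ring. Qed.

Lemma cyc_lap_sum K f : \sum_(0 <= p < K.+1) cyc_lap K.+1 f p = 0.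
Proof.
have sum_next : \sum_(0 <= p < K.+1) f (if p == K then 0%N else p.+1) =
    \sum_(0 <= p < K.+1) f p.
  rewrite big_nat_recr //= eqxx big_nat_recl //= addrC; congr (_ + _).
  by apply: eq_big_nat => p /andP [_ hp]; rewrite ifF //; lia.
have sum_prev : \sum_(0 <= p < K.+1) f (if p == 0%N then K else p.-1) =
    \sum_(0 <= p < K.+1) f p.
  by rewrite big_nat_recl //= big_nat_recr //= addrC.
rewrite /cyc_lap /= !big_split /= sum_next sum_prev sumrN -big_distrr /=; ring.
Qed.

Lemma cyc_lap_base K f : cyc_lap K.+1 f 0%N = - \sum_(1 <= p < K.+1) cyc_lap K.+1 f p.
Proof. by apply/eqP; rewrite -addr_eq0 -big_ltn // cyc_lap_sum. Qed.

Lemma cyc_lap_wsum K f :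
  \sum_(0 <= p < K.+1) p%:Z * cyc_lap K.+1 f p = K.+1%:Z * (f 0%N - f K).
Proof.
have next : \sum_(0 <= p < K.+1) p%:Z * f (if p == K then 0%N else p.+1) =
    \sum_(0 <= q < K) q%:Z * f q.+1 + K%:Z * f 0%N.
  rewrite big_nat_recr //= eqxx; congr (_ + _).
  by apply: eq_big_nat => p /andP [_ hp]; rewrite ifF //; lia.
have prev : \sum_(0 <= p < K.+1) p%:Z * f (if p == 0%N then K else p.-1) =
    \sum_(0 <= q < K) q.+1%:Z * f q.
  by rewrite big_nat_recl //= mul0r add0r.
have self_r : \sum_(0 <= p < K.+1) p%:Z * f p =
    \sum_(0 <= q < K) q%:Z * f q + K%:Z * f K.
  by rewrite big_nat_recr.
have self_l : \sum_(0 <= p < K.+1) p%:Z * f p = \sum_(0 <= q < K) q.+1%:Z * f q.+1.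
  by rewrite big_nat_recl //= mul0r add0r.
have tele : \sum_(0 <= q < K) (q.+1%:Z * f q + q%:Z * f q.+1
    - q%:Z * f q - q.+1%:Z * f q.+1) = f 0%N - f K.
  rewrite -opprB -telescope_sumr // -sumrN; apply: eq_bigr => q _; rewrite intS; ring.
rewrite (eq_bigr (fun p => p%:Z * f (if p == 0%N then K else p.-1)
    + p%:Z * f (if p == K then 0%N else p.+1) - p%:Z * f p - p%:Z * f p)); last first.
  by move=> p _; rewrite /cyc_lap /=; ring.
rewrite !sumrB big_split /= prev next {1}self_r self_l.
rewrite !sumrB big_split /= in tele.
by rewrite intS mulrDl mul1r -{1}tele; ring.
Qed.

Lemma cyc_lap_base_ge0 K f : (forall p, (0 < p < K.+1)%N -> cyc_lap K.+1 f p <= 0) ->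
  0 <= cyc_lap K.+1 f 0%N.
Proof.
move=> h; rewrite cyc_lap_base oppr_ge0 big_nat_cond.
by apply: sumr_le0 => p /andP [/andP [h1 h2] _]; apply: h; lia.
Qed.

(* Compare the degree 0 of this principal divisor with its first moment, a multiple
   of the length of the cycle. *)
Lemma cyc_lap_base_ge2 K f : (forall p, (0 < p < K.+2)%N -> cyc_lap K.+2 f p <= 0) ->
  cyc_lap K.+2 f 1%N <= -1 -> 2 <= cyc_lap K.+2 f 0%N.
Proof.
move=> h h1.
set mu := cyc_lap K.+2 f.
have moment := cyc_lap_wsum K.+1 f; rewrite -/mu big_ltn //= mul0r add0r in moment.
have base := cyc_lap_base K.+1 f; rewrite -/mu in base.
have moment_le : \sum_(1 <= p < K.+2) p%:Z * mu p <= -1.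
  rewrite big_ltn // mul1r.
  have : \sum_(2 <= p < K.+2) p%:Z * mu p <= 0.
    rewrite big_nat_cond; apply: sumr_le0 => p /andP [/andP [hp1 hp2] _].
    by rewrite pmulr_rle0; [apply: h | ]; lia.
  by move=> hle; apply: (le_trans (lerD h1 hle)); rewrite addr0.
have moment_ge : \sum_(1 <= p < K.+2) K.+1%:Z * mu p <= \sum_(1 <= p < K.+2) p%:Z * mu p.
  rewrite big_nat_cond [X in _ <= X]big_nat_cond.
  apply: ler_sum => p /andP [/andP [hp1 hp2] _].
  have hm : mu p <= 0 by apply: h; lia.
  by rewrite -subr_ge0 -mulrBl; apply: mulr_le0 hm; lia.
rewrite -mulr_sumr moment in moment_ge; rewrite moment in moment_le; rewrite base.
move: moment_le moment_ge.
set z := f 0%N - f K.+1; set s := \sum_(1 <= p < K.+2) mu p => moment_le moment_ge.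
have z_neg : z <= -1.
  rewrite leNgt; apply/negP => hz.
  have : 0 <= K.+2%:Z * z by apply: mulr_ge0; lia.
  lia.
have : K.+2%:Z * z <= K.+2%:Z * (-1) by rewrite ler_pM2l.
have : K.+1%:Z * s < K.+1%:Z * (-1) by nia.
by rewrite ltr_pM2l //; lia.
Qed.

(* The sum has second differences [m]; when [m] has degree 0 and a first moment
   divisible by [L], the linear term makes the potential [L]-periodic. *)
Definition cyc_potential (L : nat) (m : nat -> int) (p : nat) : int :=
  \sum_(0 <= x < L) m x * ((p - x)%N)%:Z
  + ((\sum_(0 <= x < L) x%:Z * m x) %/ L%:Z)%Z * p%:Z.

Lemma cyc_potential0 L m : cyc_potential L m 0 = 0.
Proof. by rewrite /cyc_potential big1 ?add0r ?mulr0 // => x _; rewrite sub0n mulr0. Qed.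

Lemma cyc_lap_potential K m : \sum_(0 <= x < K.+2) m x = 0 ->
  (K.+2%:Z %| \sum_(0 <= x < K.+2) x%:Z * m x)%Z ->
  forall p, (p < K.+2)%N -> cyc_lap K.+2 (cyc_potential K.+2 m) p = m p.
Proof.
move=> hs /divzK hw p hp.
set g := cyc_potential K.+2 m.
set t := ((\sum_(0 <= x < K.+2) x%:Z * m x) %/ K.+2%:Z)%Z in hw.
have tail : forall q, (K.+2 <= q.+1)%N -> g q = t * (q%:Z - K.+2%:Z).
  move=> q hq; rewrite /g /cyc_potential -/t.
  have -> : \sum_(0 <= x < K.+2) m x * ((q - x)%N)%:Z =
      q%:Z * \sum_(0 <= x < K.+2) m x - \sum_(0 <= x < K.+2) x%:Z * m x.
    rewrite mulr_sumr -sumrB; apply: eq_big_nat => x /andP [_ hx].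
    by rewrite (_ : ((q - x)%N)%:Z = q%:Z - x%:Z); [ring | lia].
  by rewrite hs -hw; ring.
have gL : g K.+2 = 0 by rewrite tail // subrr mulr0.
have gL1 : g K.+1 = - t by rewrite tail // !intS; ring.
have inner : forall q, (0 < q < K.+2)%N -> g q.-1 + g q.+1 - 2 * g q = m q.
  move=> q hq; rewrite /g /cyc_potential.
  have second_diff : forall x, ((q.-1 - x)%N)%:Z + ((q.+1 - x)%N)%:Z
      - 2 * ((q - x)%N)%:Z = b2z (x == q).
    by move=> x; rewrite /b2z; case: eqP => ?; lia.
  transitivity (\sum_(0 <= x < K.+2) b2z (x == q) * m x
      + t * ((q.-1)%:Z + (q.+1)%:Z - 2 * q%:Z)); last first.
    by rewrite sum_nat_pick; [rewrite (_ : _ + _ - _ = 0) ?mulr0 ?addr0 | ]; lia.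
  under [in RHS]eq_bigr => x _ do rewrite -second_diff.
  rewrite [in RHS](eq_bigr (fun x => m x * ((q.-1 - x)%N)%:Z
      + m x * ((q.+1 - x)%N)%:Z - 2 * (m x * ((q - x)%N)%:Z))); last by move=> x _; ring.
  rewrite -/t !sumrB big_split /= -mulr_sumr; ring.
rewrite /cyc_lap /=.
case: (p =P 0%N) => [->|hp0] /=.
  rewrite gL1 /g cyc_potential0 /cyc_potential -/t big_ltn // big1_seq; last first.
    move=> x /andP [_]; rewrite mem_index_iota => /andP [h1 _].
    by rewrite (_ : (1 - x)%N = 0%N) ?mulr0 //; lia.
  rewrite subn0 mulr1 addr0 mulr1; ring.
case: (p =P K.+1) => [->|hpK].
  by rewrite -(inner K.+1) //= gL /g cyc_potential0.
by rewrite inner //; lia.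
Qed.

Definition mod_complement (W : int) (L : nat) : nat := `|((- W) %% L%:Z)%Z|%N.

Lemma mod_complementP W L : (0 < L)%N ->
  (mod_complement W L < L)%N /\ (L%:Z %| W + (mod_complement W L)%:Z)%Z.
Proof.
move=> hL.
have hL' : (L%:Z != 0 :> int) by rewrite eqz_nat; lia.
have h0 := modz_ge0 (- W) hL'.
have h1 : ((- W) %% L%:Z)%Z < L%:Z by apply: ltz_pmod; lia.
rewrite /mod_complement gez0_abs //; split; first by lia.
by apply/dvdz_mod0P; rewrite modzDmr subrr mod0z.
Qed.

Lemma mod_complement0 L : mod_complement 0 L = 0%N.
Proof. by rewrite /mod_complement oppr0 mod0z. Qed.

Definition edge_at (G : graph) (j : nat) : nat * nat := nth (0%N, 0%N) (edges G) j.

Definition loops_subdivided (G : graph) (n : nat -> nat) : Prop :=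
  forall j, (j < size (edges G))%N -> is_loop (edge_at G j) -> (0 < n j)%N.

(* Vertex [i] of the cycle of length [k + 1] that replaces a loop at [b] whose new
   vertices are [o, ..., o + k - 1]; vertex [k + 1] wraps around to [b]. *)
Definition cycle_vertex (b o k i : nat) : nat :=
  if (i == 0%N) || (k < i)%N then b else (o + i.-1)%N.

Lemma sub_edges_loop G cnt j e : is_loop e -> (0 < cnt j)%N ->
  sub_edges G cnt j e =
  [seq (cycle_vertex e.1 (sub_offset G cnt j) (cnt j) i,
        cycle_vertex e.1 (sub_offset G cnt j) (cnt j) i.+1) | i <- iota 0 (cnt j).+1].
Proof.
rewrite /is_loop /sub_edges => /eqP he.
case: (cnt j) => [//|k] _.
set o := sub_offset G cnt j.
have -> : iota 0 k.+2 = 0%N :: map (addn 1) (iota 0 k) ++ [:: k.+1].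
  by rewrite -[k.+2]addn1 iotaD /= -(iotaDl 1 0).
rewrite /= map_cat -map_comp /cycle_vertex /= addn0 ltnn ltnSn /= he.
congr (_ :: _ ++ _); apply/eq_in_map => i; rewrite mem_iota /= => hi.
by rewrite !ifF ?add1n ?addnS //; lia.
Qed.

Lemma cycle_edges_flow (b o k : nat) (c : nat -> int) w : (b < o)%N -> (0 < k)%N ->
  \sum_(e <- [seq (cycle_vertex b o k i, cycle_vertex b o k i.+1) | i <- iota 0 k.+1])
     edge_flow c e w =
  \sum_(0 <= p < k.+1) b2z (cycle_vertex b o k p == w) *
     cyc_lap k.+1 (fun i => c (cycle_vertex b o k i)) p.
Proof.
move=> hbo hk.
set f := fun i => c (cycle_vertex b o k i).
pose A i := b2z (cycle_vertex b o k i == w) * (f i.+1 - f i).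
pose B p := b2z (cycle_vertex b o k p == w) * (f p.-1 - f p).
have flowAB : forall i, (0 <= i < k.+1)%N ->
    edge_flow c (cycle_vertex b o k i, cycle_vertex b o k i.+1) w = A i + B i.+1.
  move=> i /andP [_ hi]; rewrite /edge_flow /A /B /f /= ifF.
    by rewrite /b2z; do 2 case: eqP => _; lia.
  by apply/eqP; rewrite /cycle_vertex; case: (i =P 0%N) => [->|?] /=;
    [rewrite ltnNge hk /=; lia | case: ltnP => ?; case: ltnP => ? /=; lia].
rewrite big_map (_ : iota 0 k.+1 = index_iota 0 k.+1); last by rewrite /index_iota subn0.
rewrite (eq_big_nat _ _ flowAB).
rewrite [RHS](eq_big_nat _ _ (F2 := fun p => A p + (b2z (cycle_vertex b o k p == w) *
   (f (if p == 0%N then k else p.-1) - f p)))); last first.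
  move=> p /andP [_ hp]; rewrite /cyc_lap /A /=.
  have -> : f (if p == k then 0%N else p.+1) = f p.+1.
    by case: eqP => //= ->; rewrite /f /cycle_vertex /= ltnSn.
  ring.
rewrite !big_split /=; congr (_ + _).
rewrite [LHS]big_nat_recr // [RHS]big_ltn // big_add1 /= addrC; congr (_ + _).
by rewrite /B /f /cycle_vertex /= ltnSn.
Qed.

Lemma cycle_vertex_new b o k p w : (b < o)%N -> (p < k.+1)%N -> (o <= w < o + k)%N ->
  (cycle_vertex b o k p == w) = (p == (w - o).+1).
Proof.
move=> hbo hp hw; rewrite /cycle_vertex.
case: (p =P 0%N) => [->|hp0] /=; first by rewrite (_ : (b == w) = false) //; lia.
by rewrite ltnNge (_ : (p <= k)%N) /=; [apply/eqP/eqP | ]; lia.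
Qed.

Lemma cycle_vertex_old b o k p w : (0 < p < k.+1)%N -> (w < o)%N ->
  (cycle_vertex b o k p == w) = false.
Proof. by move=> hp hw; rewrite /cycle_vertex !ifF //; lia. Qed.

Lemma sum_cycle_vertex_new b o k w (g : nat -> int) : (b < o)%N -> (o <= w < o + k)%N ->
  \sum_(0 <= p < k.+1) b2z (cycle_vertex b o k p == w) * g p = g (w - o).+1.
Proof.
move=> hbo hw; rewrite (eq_big_nat _ _ (F2 := fun p => b2z (p == (w - o).+1) * g p)).
  by apply: sum_nat_pick; lia.
by move=> p /andP [_ hp]; rewrite cycle_vertex_new.
Qed.

Lemma sum_cycle_vertex_old b o k w (g : nat -> int) : (w < o)%N ->
  \sum_(0 <= p < k.+1) b2z (cycle_vertex b o k p == w) * g p = b2z (b == w) * g 0%N.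
Proof.
move=> hw; rewrite big_ltn // big1_seq ?addr0 // => p /andP [_].
by rewrite mem_index_iota => hp; rewrite cycle_vertex_old // /b2z mul0r.
Qed.

Lemma sum_cycle_vertex_other b o k w (g : nat -> int) : b != w ->
  ((w < o) || (o + k <= w))%N ->
  \sum_(0 <= p < k.+1) b2z (cycle_vertex b o k p == w) * g p = 0.
Proof.
move=> hb hw; rewrite big1_seq // => p /andP [_].
rewrite mem_index_iota => hp; rewrite /cycle_vertex.
case: (p =P 0%N) => [_|hp0] /=; first by rewrite (negbTE hb) /b2z mul0r.
rewrite ltnNge (_ : (p <= k)%N) /=; last by lia.
by rewrite (_ : (o + p.-1 == w) = false) ?/b2z ?mul0r //; lia.
Qed.

Lemma sum_nat_blocks (E : nat -> int) N (cnt : nat -> nat) M :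
  \sum_(0 <= w < N + \sum_(0 <= i < M) cnt i) E w =
  \sum_(0 <= w < N) E w +
  \sum_(0 <= j < M) \sum_(0 <= i < cnt j) E (N + \sum_(0 <= i < j) cnt i + i)%N.
Proof.
elim: M => [|M IH].
  have -> : \sum_(0 <= i < 0) cnt i = 0%N by rewrite big_geq.
  by rewrite [\sum_(0 <= j < 0) _]big_geq // addr0 addn0.
rewrite big_nat_recr //= [in RHS]big_nat_recr //= addrA -IH addnA.
rewrite (big_cat_nat _ (n := (N + \sum_(0 <= i < M) cnt i)%N)) //=; last by lia.
congr (_ + _); rewrite -{1}(add0n (N + _)%N) big_addn addKn.
by apply: eq_big_nat => i _; rewrite addnC.
Qed.

Section LoopRefinement.

Variables (G : graph) (n : nat -> nat).

Definition loop_offset (j : nat) : nat := sub_offset G (loop_counts G n) j.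

Definition loop_potential (c : nat -> int) (j : nat) : nat -> int :=
  fun i => c (cycle_vertex (edge_at G j).1 (loop_offset j) (n j) i).

Lemma loop_offset_ge j : (nV G <= loop_offset j)%N.
Proof. by rewrite /loop_offset /sub_offset leq_addr. Qed.

Lemma loop_offset_mono j j' : (j < j')%N ->
  (loop_offset j + loop_counts G n j <= loop_offset j')%N.
Proof.
move=> hj; rewrite /loop_offset /sub_offset -addnA leq_add2l.
rewrite [\sum_(0 <= i < j') _](big_cat_nat _ (n := j.+1)) //= big_nat_recr //=.
exact: leq_addr.
Qed.

Lemma loop_offset_end j : (j < size (edges G))%N ->
  (loop_offset j + loop_counts G n j <= nV (refine_loops G n))%N.
Proof.
move=> hj; rewrite /loop_offset /sub_offset /= -addnA leq_add2l.
rewrite [\sum_(0 <= i < size _) _](big_cat_nat _ (n := j.+1)) //= big_nat_recr //=.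
exact: leq_addr.
Qed.

Lemma nV_refine_ge : (nV G <= nV (refine_loops G n))%N.
Proof. by rewrite /refine_loops /subdivide /= leq_addr. Qed.

Lemma new_vertex_block w : (nV G <= w < nV (refine_loops G n))%N ->
  exists2 j, (j < size (edges G))%N &
    (loop_offset j <= w < loop_offset j + loop_counts G n j)%N.
Proof.
rewrite /refine_loops /subdivide /=.
elim: (size (edges G)) => [|M IH]; first by rewrite big_geq //; lia.
move=> /andP [h1 h2].
case: (ltnP w (nV G + \sum_(0 <= j < M) loop_counts G n j)) => h3.
  by have [j hj hw] := IH (introT andP (conj h1 h3)); exists j => //; lia.
by exists M => //; move: h2; rewrite big_nat_recr //= /loop_offset /sub_offset; lia.
Qed.

Lemma loop_counts_pos j : (0 < loop_counts G n j)%N ->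
  is_loop (edge_at G j) /\ loop_counts G n j = n j.
Proof. by rewrite /loop_counts -/(edge_at G j); case: ifP. Qed.

Lemma loop_counts_loop j : is_loop (edge_at G j) -> loop_counts G n j = n j.
Proof. by rewrite /loop_counts -/(edge_at G j) => ->. Qed.

Lemma loop_counts_nonloop j : ~~ is_loop (edge_at G j) -> loop_counts G n j = 0%N.
Proof. by rewrite /loop_counts -/(edge_at G j) => /negbTE ->. Qed.

Lemma new_vertex_block_unique w j j' :
  is_loop (edge_at G j) -> is_loop (edge_at G j') -> j' != j ->
  (loop_offset j <= w < loop_offset j + n j)%N ->
  ~~ (loop_offset j' <= w < loop_offset j' + n j')%N.
Proof.
move=> hl hl' hne; case: (ltngtP j' j) hne => // hjj _.
  by have := loop_offset_mono hjj; rewrite loop_counts_loop //; lia.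
by have := loop_offset_mono hjj; rewrite loop_counts_loop //; lia.
Qed.

Lemma laplacian_refine_split c w :
  laplacian (refine_loops G n) c w = laplacian G c w +
  \sum_(0 <= j < size (edges G) | is_loop (edge_at G j))
     \sum_(e <- sub_edges G (loop_counts G n) j (edge_at G j)) edge_flow c e w.
Proof.
rewrite /laplacian /refine_loops /subdivide /= big_flatten /= big_map /edge_at.
rewrite [in RHS](big_nth (0%N,0%N)).
rewrite (_ : iota _ _ = index_iota 0 (size (edges G))); last by rewrite /index_iota subn0.
set L := fun j => is_loop (nth (0%N,0%N) (edges G) j).
rewrite (bigID L) /= [X in X = _]addrC [\sum_(0 <= i < _) edge_flow _ _ _](bigID L) /=.
rewrite [X in _ = X + _ + _]big1 ?add0r; last first.
  by move=> j; rewrite /L /edge_flow /is_loop => ->.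
congr (_ + _); apply: eq_bigr => j; rewrite /L => /negbTE h.
by rewrite /sub_edges /loop_counts h /= big_seq1.
Qed.

Hypothesis wfG : wf_graph G.
Hypothesis n_pos : loops_subdivided G n.

Lemma edge_at_wf j : (j < size (edges G))%N ->
  ((edge_at G j).1 < nV G)%N /\ ((edge_at G j).2 < nV G)%N.
Proof.
by move=> hj; have /andP [] := allP wfG _ (mem_nth (0%N, 0%N) hj).
Qed.

Lemma wf_refine_loops : wf_graph (refine_loops G n).
Proof.
apply/allP => e /flatten_mapP [j].
rewrite mem_iota add0n => /andP [_ hj].
have [ha hb] := edge_at_wf hj.
have hN := loop_offset_end hj; simpl in hN; have hge := loop_offset_ge j.
rewrite /sub_edges -/(edge_at G j) -/(loop_offset j).
case: eqP => [_ |hk]; first by rewrite inE => /eqP -> /=; apply/andP; split; lia.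
rewrite inE => /orP [/eqP -> /=|]; first by apply/andP; split; lia.
rewrite mem_cat => /orP [/mapP [i]|].
  by rewrite mem_iota => /andP [_ hi] -> /=; apply/andP; split; lia.
by rewrite inE => /eqP -> /=; apply/andP; split; lia.
Qed.

Lemma laplacian_refine c w :
  laplacian (refine_loops G n) c w = laplacian G c w +
  \sum_(0 <= j < size (edges G) | is_loop (edge_at G j))
    \sum_(0 <= p < (n j).+1)
      b2z (cycle_vertex (edge_at G j).1 (loop_offset j) (n j) p == w) *
      cyc_lap (n j).+1 (loop_potential c j) p.
Proof.
rewrite laplacian_refine_split; congr (_ + _).
rewrite big_nat_cond [RHS]big_nat_cond; apply: eq_bigr => j /andP [/andP [_ hj] hl].
rewrite sub_edges_loop ?(loop_counts_loop hl) ?n_pos //.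
rewrite cycle_edges_flow ?n_pos //.
exact: leq_trans (proj1 (edge_at_wf hj)) (loop_offset_ge j).
Qed.

Lemma laplacian_refine_old c w : (w < nV G)%N ->
  laplacian (refine_loops G n) c w = laplacian G c w +
  \sum_(0 <= j < size (edges G) | is_loop (edge_at G j))
     b2z ((edge_at G j).1 == w) * cyc_lap (n j).+1 (loop_potential c j) 0%N.
Proof.
move=> hw; rewrite laplacian_refine; congr (_ + _); apply: eq_bigr => j _.
by rewrite sum_cycle_vertex_old //; apply: leq_trans hw (loop_offset_ge j).
Qed.

Lemma laplacian_refine_new c w j : (j < size (edges G))%N ->
  (loop_offset j <= w < loop_offset j + loop_counts G n j)%N ->
  laplacian (refine_loops G n) c w =
  cyc_lap (n j).+1 (loop_potential c j) (w - loop_offset j).+1.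
Proof.
move=> hj hw.
have [hl hc] := @loop_counts_pos j ltac:(lia).
rewrite hc in hw; have hN := loop_offset_ge j.
rewrite laplacian_refine laplacian_out ?add0r //; last by lia.
rewrite (sum_nat_only hj) /=; last first.
  move=> j' hj' hne hl'; have [hb' _] := edge_at_wf hj'.
  apply: sum_cycle_vertex_other; first by apply/eqP; lia.
  by have := new_vertex_block_unique hl hl' hne hw; lia.
by rewrite hl sum_cycle_vertex_new //; have [] := edge_at_wf hj; lia.
Qed.

Lemma deg_refine (E : divisor) :
  deg (refine_loops G n) E = deg G E +
  \sum_(0 <= j < size (edges G)) \sum_(0 <= i < loop_counts G n j) E (loop_offset j + i)%N.
Proof.
by rewrite /deg /refine_loops /subdivide /= -!(big_mkord (fun _ => true)) sum_nat_blocks.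
Qed.

End LoopRefinement.

Definition loop_set_size (G : graph) (s : nat -> bool) : int :=
  \sum_(0 <= j < size (edges G) | is_loop (edge_at G j) && s j) 1.

Definition loop_set_bases (G : graph) (s : nat -> bool) (w : nat) : int :=
  \sum_(0 <= j < size (edges G) | is_loop (edge_at G j) && s j) b2z ((edge_at G j).1 == w).

(* An effective divisor on a refinement is represented by its part [E0] on [G] and
   the set [s] of loops whose cycle carries chips. *)
Definition loop_rank_ge (G : graph) (D : divisor) (k : nat) : Prop :=
  forall (E0 : divisor) (s : nat -> bool), effective G E0 ->
    deg G E0 + loop_set_size G s = k%:Z ->
    exists F, effective G F /\
      lin_equiv G (fun w => D w - E0 w - 2 * loop_set_bases G s w) F.

Section RefineToLoops.

Variables (G : graph) (n : nat -> nat) (D : divisor).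
Hypothesis wfG : wf_graph G.
Hypothesis n_pos : loops_subdivided G n.

Definition refine_divisor (E0 : divisor) (s : nat -> bool) : divisor := fun w =>
  if (w < nV G)%N then E0 w
  else \sum_(0 <= j < size (edges G) | is_loop (edge_at G j) && s j)
         b2z (w == loop_offset G n j).

Lemma refine_divisor_new E0 s j i : (j < size (edges G))%N -> is_loop (edge_at G j) ->
  (i < n j)%N -> refine_divisor E0 s (loop_offset G n j + i)%N = b2z (s j) * b2z (i == 0%N).
Proof.
move=> hj hl hi; rewrite /refine_divisor ifF; last by have := loop_offset_ge G n j; lia.
rewrite (sum_nat_only hj) /=; last first.
  move=> j' hj' hne /andP [hl' _].
  have := @new_vertex_block_unique G n (loop_offset G n j + i) j j' hl hl' hne.
  move/(_ ltac:(lia)); rewrite /b2z; case: eqP => // ->.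
  by have := n_pos hj' hl'; lia.
by rewrite hl /=; case: (s j); rewrite /b2z ?mul1r ?mul0r //; do 2 case: eqP => //; lia.
Qed.

Lemma deg_refine_divisor E0 s :
  deg (refine_loops G n) (refine_divisor E0 s) = deg G E0 + loop_set_size G s.
Proof.
rewrite deg_refine; congr (_ + _).
  by apply: eq_bigr => w _; rewrite /refine_divisor ltn_ord.
rewrite /loop_set_size [RHS]big_mkcond; apply: eq_big_nat => j /andP [_ hj].
case hl: (is_loop (edge_at G j)) => /=; last by rewrite loop_counts_nonloop ?hl // big_geq.
rewrite loop_counts_loop // (eq_big_nat _ _ (F2 := fun i => b2z (i == 0%N) * b2z (s j))).
  by rewrite sum_nat_pick ?n_pos // /b2z; case: (s j).
by move=> i /andP [_ hi]; rewrite refine_divisor_new // mulrC.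
Qed.

Lemma effective_refine_divisor E0 s :
  effective G E0 -> effective (refine_loops G n) (refine_divisor E0 s).
Proof.
move=> hE w _; rewrite /refine_divisor; case: ifP => hw; first exact: hE.
by apply: sumr_ge0 => j _; rewrite /b2z; case: eqP.
Qed.

(* On the cycle of a loop in [s], [sigma D - E - F] is non-positive off the base and
   negative next to it. *)
Lemma loop_potential_base_ge E0 s F c j : effective (refine_loops G n) F ->
  (forall w, (w < nV (refine_loops G n))%N ->
     sigma G D w - refine_divisor E0 s w - F w = laplacian (refine_loops G n) c w) ->
  (j < size (edges G))%N -> is_loop (edge_at G j) ->
  2 * b2z (s j) <= cyc_lap (n j).+1 (loop_potential G n c j) 0%N.
Proof.
move=> hF hc hj hl.
have new_le : forall p, (0 < p < (n j).+1)%N ->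
    cyc_lap (n j).+1 (loop_potential G n c j) p <= - (b2z (s j) * b2z (p == 1%N)).
  move=> p hp.
  have hend := loop_offset_end n hj; rewrite loop_counts_loop // in hend.
  have hw : (loop_offset G n j <= loop_offset G n j + p.-1 <
             loop_offset G n j + loop_counts G n j)%N.
    by rewrite loop_counts_loop //; lia.
  have := hc _ (leq_trans (proj2 (andP hw)) (loop_offset_end n hj)).
  rewrite (laplacian_refine_new wfG n_pos _ hj hw) refine_divisor_new //; last by lia.
  have -> : ((loop_offset G n j + p.-1 - loop_offset G n j).+1 = p)%N by lia.
  have -> : (p.-1 == 0%N) = (p == 1%N) by lia.
  rewrite /sigma ifF; last by have := loop_offset_ge G n j; lia.
  by have := hF (loop_offset G n j + p.-1)%N ltac:(lia); lia.
have := n_pos hj hl; case: (n j) new_le => [//|K] new_le _.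
case hs: (s j); rewrite /b2z /= ?mulr1 ?mulr0.
  apply: cyc_lap_base_ge2 => [p hp|].
    by apply: le_trans (new_le p hp) _; rewrite hs oppr_le0 /b2z; case: eqP.
  by have := new_le 1%N isT; rewrite hs /b2z /= mulr1.
by apply: cyc_lap_base_ge0 => p hp; have := new_le p hp; rewrite hs /b2z mul0r.
Qed.

Lemma loop_rank_ge_of_refine k :
  rank_ge (refine_loops G n) (sigma G D) k -> loop_rank_ge G D k.
Proof.
move=> hr E0 s hE0 hdeg.
have wfGn : wf_graph (refine_loops G n) := wf_refine_loops n wfG.
have [F [hF /(lin_equiv_laplacian _ _ wfGn) [c hc]]] :=
  hr _ (effective_refine_divisor s hE0) (etrans (deg_refine_divisor E0 s) hdeg).
pose F0 w := D w - E0 w - 2 * loop_set_bases G s w - laplacian G c w.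
exists F0; split; last first.
  by apply/lin_equiv_laplacian => //; exists c => w _; rewrite /F0; ring.
move=> w hw.
have := hc w (leq_trans hw (nV_refine_ge G n)).
rewrite /sigma /refine_divisor hw laplacian_refine_old // => hcw.
have -> : F0 w = F w + (\sum_(0 <= j < size (edges G) | is_loop (edge_at G j))
     b2z ((edge_at G j).1 == w) * cyc_lap (n j).+1 (loop_potential G n c j) 0%N -
     2 * loop_set_bases G s w) by rewrite /F0; lra.
apply: addr_ge0; first by apply: hF; apply: leq_trans hw (nV_refine_ge G n).
rewrite /loop_set_bases big_mkcondr /= mulr_sumr -sumrB big_nat_cond.
apply: sumr_ge0 => j /andP [/andP [_ hj] hl].
have := loop_potential_base_ge hF hc hj hl.
by rewrite /b2z; case: eqP => _; case: (s j); lra.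
Qed.

End RefineToLoops.

Section LoopsToRefine.

Variables (G : graph) (n : nat -> nat) (E : divisor).
Hypothesis wfG : wf_graph G.
Hypothesis n_pos : loops_subdivided G n.
Hypothesis E_eff : effective (refine_loops G n) E.

Definition loop_chips (j : nat) : int :=
  \sum_(0 <= i < loop_counts G n j) E (loop_offset G n j + i)%N.

Definition loop_used (j : nat) : bool := loop_chips j != 0.

(* All chips but one of each used loop are moved to its base. *)
Definition pushed_divisor : divisor := fun w =>
  E w + \sum_(0 <= j < size (edges G) | is_loop (edge_at G j) && loop_used j)
          b2z ((edge_at G j).1 == w) * (loop_chips j - 1).

Definition cycle_chips (j p : nat) : int :=
  if p == 0%N then 0 else E (loop_offset G n j + p.-1)%N.

Definition cycle_shift (j : nat) : nat :=
  mod_complement (\sum_(0 <= p < (n j).+1) p%:Z * cycle_chips j p) (n j).+1.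

(* A principal divisor on the cycle of loop [j]: the chips of [E] there are equivalent
   to [loop_chips j + 1] chips at the base minus one chip at [cycle_shift j], the
   position which makes the first moment divisible by the length. *)
Definition cycle_divisor (j p : nat) : int :=
  b2z (p == 0%N) * (loop_chips j + 1) - b2z (p == cycle_shift j) - cycle_chips j p.

Definition refined_potential (c0 : nat -> int) : nat -> int := fun w =>
  if (w < nV G)%N then c0 w else
  \sum_(0 <= j < size (edges G) | is_loop (edge_at G j))
     b2z ((loop_offset G n j <= w) && (w < loop_offset G n j + n j))%N *
     (c0 (edge_at G j).1 +
      cyc_potential (n j).+1 (cycle_divisor j) (w - loop_offset G n j).+1).

Lemma new_chip_ge0 j i : (j < size (edges G))%N -> (i < loop_counts G n j)%N ->
  0 <= E (loop_offset G n j + i)%N.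
Proof. by move=> hj hi; apply: E_eff; have := loop_offset_end n hj; lia. Qed.

Lemma loop_chips_ge0 j : (j < size (edges G))%N -> 0 <= loop_chips j.
Proof.
move=> hj; rewrite /loop_chips big_nat_cond; apply: sumr_ge0 => i /andP [/andP [_ hi] _].
exact: new_chip_ge0.
Qed.

Lemma effective_pushed_divisor : effective G pushed_divisor.
Proof.
move=> w hw; apply: addr_ge0; first by apply: E_eff; have := nV_refine_ge G n; lia.
rewrite big_nat_cond; apply: sumr_ge0 => j /andP [/andP [_ hj] /andP [_ hs]].
apply: mulr_ge0; first by rewrite /b2z; case: eqP.
by have := loop_chips_ge0 hj; move: hs; rewrite /loop_used; lia.
Qed.

Lemma deg_pushed_divisor :
  deg G pushed_divisor + loop_set_size G loop_used = deg (refine_loops G n) E.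
Proof.
rewrite deg_refine /deg /pushed_divisor big_split /= -addrA; congr (_ + _).
rewrite exchange_big /= /loop_set_size -big_split /=.
rewrite [RHS](bigID (fun j => is_loop (edge_at G j) && loop_used j)) /=.
rewrite [X in _ = _ + X]big1 ?addr0; last first.
  move=> j; case hl: (is_loop (edge_at G j)) => /=.
    by rewrite /loop_used negbK => /eqP.
  by rewrite loop_counts_nonloop ?hl // big_geq.
rewrite big_nat_cond [RHS]big_nat_cond; apply: eq_bigr => j /andP [/andP [_ hj] _].
have [hb _] := edge_at_wf wfG hj.
under eq_bigr => v _ do rewrite mulrC eq_sym.
by rewrite (sum_ord_pick (fun _ => loop_chips j - 1) hb) subrK.
Qed.

Lemma sum_cycle_chips j : (j < size (edges G))%N -> is_loop (edge_at G j) ->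
  \sum_(0 <= p < (n j).+1) cycle_chips j p = loop_chips j.
Proof.
by move=> hj hl; rewrite big_nat_recl // /cycle_chips /= add0r /loop_chips loop_counts_loop.
Qed.

Lemma cycle_chips_ge0 j p : (j < size (edges G))%N -> is_loop (edge_at G j) ->
  (p < (n j).+1)%N -> 0 <= cycle_chips j p.
Proof.
move=> hj hl hp; rewrite /cycle_chips; case: eqP => // hp0.
by apply: new_chip_ge0; rewrite ?loop_counts_loop //; lia.
Qed.

Lemma cycle_shift_lt j : (cycle_shift j < (n j).+1)%N.
Proof. exact: (proj1 (mod_complementP _ (ltn0Sn (n j)))). Qed.

Lemma cycle_shift_unused j : (j < size (edges G))%N -> is_loop (edge_at G j) ->
  ~~ loop_used j -> cycle_shift j = 0%N.
Proof.
move=> hj hl; rewrite /loop_used negbK -(sum_cycle_chips hj hl) big_seq.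
rewrite psumr_eq0 => [/allP chips0|p]; last first.
  by rewrite mem_index_iota => /cycle_chips_ge0; apply.
rewrite /cycle_shift big1_seq ?mod_complement0 // => p /andP [_ hp].
by have /implyP/(_ hp)/eqP -> := chips0 p hp; rewrite mulr0.
Qed.

Lemma cycle_divisor_sum j : (j < size (edges G))%N -> is_loop (edge_at G j) ->
  \sum_(0 <= p < (n j).+1) cycle_divisor j p = 0.
Proof.
move=> hj hl; rewrite /cycle_divisor !sumrB sum_cycle_chips //.
rewrite (eq_bigr (fun p => b2z (p == 0%N) * (loop_chips j + 1))) // sum_nat_pick //.
under eq_bigr => p _ do rewrite -[b2z _]mulr1.
by rewrite sum_nat_pick ?cycle_shift_lt //; ring.
Qed.

Lemma cycle_divisor_moment j :
  ((n j).+1%:Z %| \sum_(0 <= p < (n j).+1) p%:Z * cycle_divisor j p)%Z.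
Proof.
have [_ hdvd] := mod_complementP
  (\sum_(0 <= p < (n j).+1) p%:Z * cycle_chips j p) (ltn0Sn (n j)).
rewrite (eq_bigr (fun p => b2z (p == 0%N) * (p%:Z * (loop_chips j + 1))
   - b2z (p == cycle_shift j) * p%:Z - p%:Z * cycle_chips j p)); last first.
  by move=> p _; rewrite /cycle_divisor; ring.
rewrite !sumrB !sum_nat_pick ?cycle_shift_lt // mul0r sub0r -opprD addrC.
by rewrite rpredN.
Qed.

Lemma cycle_divisor_base j : (j < size (edges G))%N -> is_loop (edge_at G j) ->
  cycle_divisor j 0 <= b2z (loop_used j) * (loop_chips j + 1).
Proof.
move=> hj hl; rewrite /cycle_divisor /cycle_chips /= subr0 mul1r.
case hu: (loop_used j); first by rewrite mul1r lerBlDr lerDl /b2z; case: eqP.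
rewrite cycle_shift_unused ?hu // /b2z /= mul0r addrK.
by move: hu; rewrite /loop_used => /negbT/negPn/eqP ->.
Qed.

Lemma loop_potential_refined c0 j i : (j < size (edges G))%N -> is_loop (edge_at G j) ->
  (i < (n j).+1)%N ->
  loop_potential G n (refined_potential c0) j i =
  c0 (edge_at G j).1 + cyc_potential (n j).+1 (cycle_divisor j) i.
Proof.
move=> hj hl hi; have [hb _] := edge_at_wf wfG hj; have hN := loop_offset_ge G n j.
rewrite /loop_potential /cycle_vertex; case: (i =P 0%N) => [->|hi0] /=.
  by rewrite /refined_potential hb cyc_potential0 addr0.
rewrite ifF; last by lia.
rewrite /refined_potential ifF; last by lia.
rewrite (sum_nat_only hj) /=; last first.
  move=> j' hj' hne hl'.
  have := @new_vertex_block_unique G n (loop_offset G n j + i.-1) j j' hl hl' hne.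
  by move/(_ ltac:(lia))/negbTE ->; rewrite /b2z mul0r.
rewrite hl /b2z ifT; last by lia.
by rewrite mul1r (_ : ((loop_offset G n j + i.-1 - loop_offset G n j).+1 = i)%N) //; lia.
Qed.

Lemma cyc_lap_refined_potential c0 j p : (j < size (edges G))%N -> is_loop (edge_at G j) ->
  (p < (n j).+1)%N ->
  cyc_lap (n j).+1 (loop_potential G n (refined_potential c0) j) p = cycle_divisor j p.
Proof.
move=> hj hl hp.
rewrite (eq_cyc_lap (f' := fun i =>
  c0 (edge_at G j).1 + cyc_potential (n j).+1 (cycle_divisor j) i)) ?cyc_lap_shift //.
  have := cycle_divisor_sum hj hl; have := cycle_divisor_moment j; have := n_pos hj hl.
  by case: (n j) hp => [//|K] hp _ hm hs; apply: cyc_lap_potential.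
by move=> i hi; apply: loop_potential_refined.
Qed.

Lemma refined_remainder_old D c0 F0 w :
  (D w - pushed_divisor w - 2 * loop_set_bases G loop_used w - F0 w = laplacian G c0 w) ->
  0 <= F0 w -> (w < nV G)%N ->
  0 <= sigma G D w - E w - laplacian (refine_loops G n) (refined_potential c0) w.
Proof.
move=> hc0 hF0 hw.
rewrite laplacian_refine_old // (@eq_laplacian _ _ c0) //; last first.
  by move=> v hv; rewrite /refined_potential hv.
have base_le : \sum_(0 <= j < size (edges G) | is_loop (edge_at G j))
      b2z ((edge_at G j).1 == w) *
      cyc_lap (n j).+1 (loop_potential G n (refined_potential c0) j) 0%N <=
    \sum_(0 <= j < size (edges G) | is_loop (edge_at G j) && loop_used j)
      b2z ((edge_at G j).1 == w) * (loop_chips j - 1) + 2 * loop_set_bases G loop_used w.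
  rewrite /loop_set_bases !big_mkcondr /= mulr_sumr -big_split /= big_nat_cond.
  rewrite [X in _ <= X]big_nat_cond; apply: ler_sum => j /andP [/andP [_ hj] hl].
  rewrite cyc_lap_refined_potential //; have := cycle_divisor_base hj hl.
  by rewrite /b2z; case: eqP => _; case: (loop_used j); lra.
by move: hc0 base_le hF0; rewrite /sigma /pushed_divisor hw; lra.
Qed.

Lemma refined_remainder_new D c0 w : (nV G <= w < nV (refine_loops G n))%N ->
  0 <= sigma G D w - E w - laplacian (refine_loops G n) (refined_potential c0) w.
Proof.
move=> hw; have [j hj hwj] := new_vertex_block hw.
have [hl hcj] := @loop_counts_pos G n j ltac:(lia).
rewrite (laplacian_refine_new wfG n_pos _ hj hwj) cyc_lap_refined_potential //; last by lia.
rewrite /cycle_divisor /cycle_chips /= /sigma ifF; last by lia.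
rewrite (_ : (loop_offset G n j + (w - loop_offset G n j))%N = w); last by lia.
by rewrite /b2z mul0r; case: eqP => _; lra.
Qed.

End LoopsToRefine.

Lemma rank_ge_refine_of_loop_rank_ge G n D k : wf_graph G ->
  loops_subdivided G n ->
  loop_rank_ge G D k -> rank_ge (refine_loops G n) (sigma G D) k.
Proof.
move=> wfG n_pos hQ E hE hdeg.
have [F0 [hF0 /(lin_equiv_laplacian _ _ wfG) [c0 hc0]]] :=
  hQ _ _ (effective_pushed_divisor hE) (etrans (deg_pushed_divisor n E wfG) hdeg).
exists (fun w =>
  sigma G D w - E w - laplacian (refine_loops G n) (refined_potential G n E c0) w); split.
  move=> w hw; case: (ltnP w (nV G)) => hwN.
    by have := refined_remainder_old wfG n_pos hE (hc0 w hwN) (hF0 w hwN) hwN.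
  by have := refined_remainder_new E wfG n_pos D c0 (introT andP (conj hwN hw)).
apply/lin_equiv_laplacian; first exact: wf_refine_loops.
by exists (refined_potential G n E c0) => w _; ring.
Qed.

Lemma rank_ge_refine_iff G n D k : wf_graph G ->
  loops_subdivided G n ->
  rank_ge (refine_loops G n) (sigma G D) k <-> loop_rank_ge G D k.
Proof.
move=> wfG n_pos.
by split; [apply: loop_rank_ge_of_refine | apply: rank_ge_refine_of_loop_rank_ge].
Qed.

Lemma rank_ge0 Y D : rank_ge Y D 0 <-> exists F, effective Y F /\ lin_equiv Y D F.
Proof.
split=> [h | [F [hF [c hc]]] E hE hdeg].
  have deg0 : deg Y (fun _ => 0) = 0%:Z by rewrite /deg big1.
  have [F [hF [c hc]]] := h (fun _ => 0) (fun _ _ => lexx 0) deg0.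
  by exists F; split => //; exists c => w hw; rewrite -hc // subr0.
have E0 : forall w, (w < nV Y)%N -> E w = 0.
  move=> w hw; have := @psumr_eq0P _ _ xpredT (fun i : 'I_(nV Y) => E i).
  by move=> /(_ (fun i _ => hE i (ltn_ord i)) hdeg (Ordinal hw) isT).
exists F; split => //; exists c => w hw.
by rewrite E0 // subr0 hc.
Qed.

Lemma eq_rank Y1 D1 Y2 D2 : (forall k, rank_ge Y1 D1 k <-> rank_ge Y2 D2 k) ->
  rank Y1 D1 = rank Y2 D2.
Proof.
move=> h; rewrite /rank (_ : is_rank Y1 D1 = is_rank Y2 D2) //.
apply: functional_extensionality => r; apply: propositional_extensionality.
by rewrite /is_rank -!rank_ge0; setoid_rewrite h.
Qed.

Local Close Scope ring_scope.

Theorem proposition3p4 (G : graph) (n : nat -> nat) (D : divisor) :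
  wf_graph G -> connected G ->
  (forall j, j < size (edges G) -> is_loop (nth (0, 0) (edges G) j) -> 0 < n j) ->
  rank_sharp G D = rank (refine_loops G n) (sigma G D).
Proof.
move=> wfG _ n_pos; apply: eq_rank => k.
by rewrite rank_ge_refine_iff // rank_ge_refine_iff.
Qed.
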